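(* Let $R$ be a ring, $I$ a non-empty countable set, $D=\{\delta_i\mid i\in I\}$ a family of derivations of $R$, $X=\{x_i\mid i\in I\}$ a set of distinct non-commuting indeterminates, and $S=R[X;D]$. If $S$ is left quasi-duo or right quasi-duo, then $|I|=1$.
   Context: All rings are unital and associative. A derivation of $R$ is an additive map $\delta:R\to R$ with $\delta(rs)=r\delta(s)+\delta(r)s$. The differential polynomial ring in several indeterminates $R[X;D]$ is the set of all (noncommutative) polynomials in the indeterminates $x_i\in X$ (finite $R$-linear combinations of monomials, i.e. finite words in the alphabet $X$, with coefficients on the left), with natural addition and multiplication generated by $x_ia=ax_i+\delta_i(a)$ for $a\in R$, $i\in I$ (the $\delta_i$ need not be distinct). A ring is left (right) quasi-duo if every maximal left (right) ideal is two-sided. *)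

From mathcomp Require Import all_boot all_algebra.
Set Implicit Arguments. Unset Strict Implicit. Unset Printing Implicit Defensive.
Import GRing.Theory.
Local Open Scope ring_scope.

Definition is_derivation (R : nzRingType) (d : R -> R) : Prop :=
  (forall a b : R, d (a + b) = d a + d b) /\
  (forall a b : R, d (a * b) = a * d b + d a * b).

Definition monomial (I : Type) (S : nzRingType) (x : I -> S) (w : seq I) : S :=
  \prod_(i <- w) x i.

(* S (with the embedding phi : R -> S and the elements x_i) is the
   differential polynomial ring R[X;D]: S is a free left R-module on the
   monomials (finite words in X), with coefficients on the left, and
   multiplication satisfies x_i a = a x_i + delta_i(a). *)
Definition is_diff_poly_ring (R S : nzRingType) (I : countType)
    (delta : I -> R -> R) (phi : {rmorphism R -> S}) (x : I -> S) : Prop :=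
  [/\ (forall s : S, exists (ws : seq (seq I)) (c : seq I -> R),
          s = \sum_(w <- ws) phi (c w) * monomial x w),
      (forall (ws : seq (seq I)) (c : seq I -> R), uniq ws ->
          \sum_(w <- ws) phi (c w) * monomial x w = 0 ->
          forall w, w \in ws -> c w = 0)
    & (forall (i : I) (a : R), x i * phi a = phi a * x i + phi (delta i a))].

Definition is_left_ideal (S : nzRingType) (L : S -> Prop) : Prop :=
  [/\ L 0, (forall a b, L a -> L b -> L (a + b)), (forall a, L a -> L (- a))
    & (forall r a, L a -> L (r * a))].

Definition is_right_ideal (S : nzRingType) (L : S -> Prop) : Prop :=
  [/\ L 0, (forall a b, L a -> L b -> L (a + b)), (forall a, L a -> L (- a))
    & (forall r a, L a -> L (a * r))].

Definition is_maximal_left_ideal (S : nzRingType) (L : S -> Prop) : Prop :=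
  [/\ is_left_ideal L, ~ L 1 &
      forall L' : S -> Prop, is_left_ideal L' -> (forall a, L a -> L' a) ->
        (forall a, L' a <-> L a) \/ (forall a, L' a)].

Definition is_maximal_right_ideal (S : nzRingType) (L : S -> Prop) : Prop :=
  [/\ is_right_ideal L, ~ L 1 &
      forall L' : S -> Prop, is_right_ideal L' -> (forall a, L a -> L' a) ->
        (forall a, L' a <-> L a) \/ (forall a, L' a)].

Definition left_quasi_duo (S : nzRingType) : Prop :=
  forall L : S -> Prop, is_maximal_left_ideal L -> is_right_ideal L.

Definition right_quasi_duo (S : nzRingType) : Prop :=
  forall L : S -> Prop, is_maximal_right_ideal L -> is_left_ideal L.

From mathcomp Require Import all_boot all_algebra.
From mathcomp Require Import boolp classical_sets.
Set Implicit Arguments. Unset Strict Implicit. Unset Printing Implicit Defensive.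
Import GRing.Theory.
Local Open Scope ring_scope.

(* In a left quasi-duo ring T, T a + T (1 - a b) = T for all a, b: otherwise
   this left ideal lies in a maximal left ideal M, which is two-sided, hence
   contains a b and 1 - a b, hence 1.  Dually, a T + (1 - b a) T = T in a right
   quasi-duo ring, which is the same statement for the opposite ring.
   In R[X;D] with i <> j, comparing coefficients of the longest words shows
   that f x_j + g (1 - x_j x_i) = 1 and x_j f + (1 - x_i x_j) g = 1 have no
   solutions: the derivations never lengthen words, so on the longest words
   the coefficients of x_i x_j g are those of g shifted by two letters. *)

Section MaximalLeftIdeal.
Local Open Scope classical_set_scope.
Variables (T : nzRingType) (L0 : set T).
Hypotheses (L0_ideal : is_left_ideal L0) (L0_proper : ~ L0 1).

Let proper_over (X : set T) := [/\ is_left_ideal X, ~ X 1 & L0 `<=` X].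

Lemma bigcup_chain_proper_over (F : set (set T)) (X0 : set T) (a0 : T) :
  F `<=` (fun X => X = set0 \/ proper_over X) -> total_on F subset ->
  F X0 -> X0 a0 -> proper_over (\bigcup_(X in F) X).
Proof.
move=> FP Ftot FX0 X0a0.
have member X a : F X -> X a -> proper_over X.
  by move=> FX Xa; case: (FP X FX) => // X_0; rewrite X_0 in Xa.
have [[_ _ _ _] _ L0X0] := member X0 a0 FX0 X0a0.
split; [split| |].
- by exists X0 => //; apply: L0X0; case: L0_ideal.
- move=> a b [X FX Xa] [Y FY Yb].
  have [XY|YX] := Ftot X Y FX FY.
  + have [[_ YD _ _] _ _] := member Y b FY Yb.
    by exists Y => //; apply: YD => //; apply: XY.
  + have [[_ XD _ _] _ _] := member X a FX Xa.
    by exists X => //; apply: XD => //; apply: YX.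
- move=> a [X FX Xa]; have [[_ _ XN _] _ _] := member X a FX Xa.
  by exists X => //; apply: XN.
- move=> r a [X FX Xa]; have [[_ _ _ XM] _ _] := member X a FX Xa.
  by exists X => //; apply: XM.
- by move=> [X FX X1]; have [_ nX1 _] := member X 1 FX X1.
- by move=> a /L0X0 X0a; exists X0.
Qed.

Lemma exists_maximal_left_ideal :
  exists M, is_maximal_left_ideal M /\ L0 `<=` M.
Proof.
(* set0 is admitted so that the union of the empty chain stays in the family *)
have [A [PA Amax]] : exists A, (A = set0 \/ proper_over A) /\
    forall B, A `<` B -> ~ (B = set0 \/ proper_over B).
  apply: Zorn_bigcup => F FP Ftot.
  have [[X0 [FX0 [a0 X0a0]]]|empty] := pselect (exists X, F X /\ X !=set0).
    by right; exact: bigcup_chain_proper_over FP Ftot FX0 X0a0.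
  left; apply/seteqP; split=> // a [X FX Xa].
  by case: empty; exists X; split; last exists a.
have L0_0 : L0 0 by case: L0_ideal.
have {PA} [A_ideal A_proper L0A] : proper_over A.
  case: PA => // A_0; exfalso; apply: (Amax L0).
    by rewrite A_0; split=> // /(_ 0 L0_0).
  by right; split.
exists A; split=> //; split=> // L' L'_ideal AL'.
have [L'1|L'_proper] := pselect (L' 1).
  by right=> a; case: L'_ideal => _ _ _ /(_ a 1 L'1); rewrite mulr1.
left=> a; split=> [L'a|]; last exact: AL'.
apply: contrapT => nAa; apply: (Amax L').
  by split=> // /(_ a L'a).
by right; split=> // b /L0A /AL'.
Qed.

End MaximalLeftIdeal.

Lemma left_quasi_duo_comaximal (T : nzRingType) (a b : T) :
  left_quasi_duo T -> exists f g : T, f * a + g * (1 - a * b) = 1.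
Proof.
move=> qduo.
pose L0 (s : T) := exists f g : T, s = f * a + g * (1 - a * b).
have L0_ideal : is_left_ideal L0.
  split.
  - by exists 0, 0; rewrite !mul0r addr0.
  - move=> _ _ [f1 [g1 ->]] [f2 [g2 ->]]; exists (f1 + f2), (g1 + g2).
    by rewrite !mulrDl addrACA.
  - by move=> _ [f [g ->]]; exists (- f), (- g); rewrite !mulNr opprD.
  - by move=> r _ [f [g ->]]; exists (r * f), (r * g); rewrite mulrDr !mulrA.
have [[f [g E]]|L0_proper] := pselect (L0 1); first by exists f, g.
have [M [M_max L0M]] := exists_maximal_left_ideal L0_ideal L0_proper.
have [_ MD _ MM] := qduo M M_max; case: M_max => _ M_proper _.
have Ma : M a by apply: L0M; exists 1, 0; rewrite mul1r mul0r addr0.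
have M1ab : M (1 - a * b) by apply: L0M; exists 0, 1; rewrite mul0r add0r mul1r.
by case: M_proper; rewrite -(subrK (a * b) 1); apply: MD => //; apply: MM.
Qed.

Lemma right_quasi_duo_comaximal (T : nzRingType) (a b : T) :
  right_quasi_duo T -> exists f g : T, a * f + (1 - b * a) * g = 1.
Proof. exact: (@left_quasi_duo_comaximal T^c a b). Qed.

Lemma additive_map0 (R : nzRingType) (d : R -> R) :
  (forall a b, d (a + b) = d a + d b) -> d 0 = 0.
Proof. by move=> dD; apply: (addrI (d 0)); rewrite -dD !addr0. Qed.

Lemma descend_to0 (P : nat -> Prop) n : (forall m, P m.+1 -> P m) -> P n -> P 0.
Proof. by move=> desc; elim: n => // n IHn /desc. Qed.

Section Coefficients.
Variables (R S : nzRingType) (I : countType) (delta : I -> R -> R)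
  (phi : {rmorphism R -> S}) (x : I -> S).
Hypothesis hS : is_diff_poly_ring delta phi x.

Definition is_coef (s : S) (c : seq I -> R) := exists ws : seq (seq I),
  [/\ uniq ws, (forall w, w \notin ws -> c w = 0) &
      s = \sum_(w <- ws) phi (c w) * monomial x w].

Lemma sum_monomial_widen (ws ws' : seq (seq I)) (c : seq I -> R) :
  uniq ws -> uniq ws' -> {subset ws <= ws'} ->
  (forall w, w \notin ws -> c w = 0) ->
  \sum_(w <- ws) phi (c w) * monomial x w =
  \sum_(w <- ws') phi (c w) * monomial x w.
Proof.
move=> ws_uniq ws'_uniq sub c0.
rewrite [RHS](bigID (mem ws)) /= [X in _ = _ + X]big1 ?addr0; last first.
  by move=> w /c0 ->; rewrite rmorph0 mul0r.
rewrite -[RHS]big_filter; apply/perm_big/uniq_perm; rewrite ?filter_uniq //.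
by move=> w; rewrite mem_filter andb_idr //; apply: sub.
Qed.

Lemma is_coef0 : is_coef 0 (fun _ => 0).
Proof. by exists [::]; rewrite big_nil. Qed.

Lemma is_coef_monomial a w :
  is_coef (phi a * monomial x w) (fun v => if v == w then a else 0).
Proof.
exists [:: w]; split=> //; last by rewrite big_seq1 eqxx.
by move=> v; rewrite inE => /negbTE ->.
Qed.

Lemma is_coef1 : is_coef 1 (fun v => if v == [::] then 1 else 0).
Proof.
by have := is_coef_monomial 1 [::]; rewrite rmorph1 mul1r /monomial big_nil.
Qed.

Lemma is_coefD s t c d :
  is_coef s c -> is_coef t d -> is_coef (s + t) (fun v => c v + d v).
Proof.
move=> [ws1 [u1 c0 ->]] [ws2 [u2 d0 ->]].
have u := undup_uniq (ws1 ++ ws2).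
exists (undup (ws1 ++ ws2)); split=> //.
  move=> w; rewrite mem_undup mem_cat negb_or => /andP[/c0 -> /d0 ->].
  by rewrite addr0.
rewrite (@sum_monomial_widen ws1 (undup (ws1 ++ ws2))) //; last first.
  by move=> w; rewrite mem_undup mem_cat => ->.
rewrite (@sum_monomial_widen ws2 (undup (ws1 ++ ws2))) //; last first.
  by move=> w; rewrite mem_undup mem_cat orbC => ->.
by rewrite -big_split; apply: eq_bigr => w _; rewrite rmorphD mulrDl.
Qed.

Lemma is_coefN s c : is_coef s c -> is_coef (- s) (fun v => - c v).
Proof.
move=> [ws [u c0 ->]]; exists ws; split=> //.
  by move=> w /c0 ->; rewrite oppr0.
by rewrite -sumrN; apply: eq_bigr => w _; rewrite rmorphN mulNr.
Qed.

Lemma is_coef_exists s : exists c, is_coef s c.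
Proof.
case: hS => spans _ _; have [ws [c ->]] := spans s.
elim: ws => [|w ws [c' IH]].
  by exists (fun _ => 0); rewrite big_nil; exact: is_coef0.
by rewrite big_cons; eexists; exact: is_coefD (is_coef_monomial _ _) IH.
Qed.

Lemma is_coef_unique s c d : is_coef s c -> is_coef s d -> forall v, c v = d v.
Proof.
move=> sc sd v; apply/eqP; rewrite -subr_eq0; apply/eqP.
have [ws [u cd0 /esym]] := is_coefD sc (is_coefN sd); rewrite subrr => sum0.
have [v_ws|] := boolP (v \in ws); last exact: cd0.
by case: hS => _ free _; exact: free sum0 v v_ws.
Qed.

Definition coef_vanish (c : seq I -> R) n := forall v, (n <= size v)%N -> c v = 0.

Lemma is_coef_vanish s c : is_coef s c -> exists n, coef_vanish c n.
Proof.
move=> [ws [_ c0 _]]; exists (\max_(w <- ws) size w).+1 => v long_v; apply: c0.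
apply: contraTN long_v => v_ws.
by rewrite -ltnNge ltnS (@leq_bigmax_seq _ ws xpredT size v v_ws).
Qed.

Lemma coef_vanishW c m n : (m <= n)%N -> coef_vanish c m -> coef_vanish c n.
Proof. by move=> mn cm v nv; apply: cm; exact: leq_trans nv. Qed.

Definition coef_mulx (k : I) (c : seq I -> R) (v : seq I) : R :=
  if v is y :: v' then (if last y v' == k then c (belast y v') else 0) else 0.

Lemma coef_mulx_rcons k c w : coef_mulx k c (rcons w k) = c w.
Proof. by case: w => [|y w] /=; rewrite ?last_rcons ?belast_rcons eqxx. Qed.

Lemma coef_mulx_rcons_neq k k' c w : k' != k -> coef_mulx k c (rcons w k') = 0.
Proof. by move/negbTE=> kk'; case: w => [|y w] /=; rewrite ?last_rcons kk'. Qed.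

Lemma is_coef_mulx s c k : is_coef s c -> is_coef (s * x k) (coef_mulx k c).
Proof.
move=> [ws [u c0 ->]]; exists (map (rcons^~ k) ws); split.
- by rewrite map_inj_uniq //; exact: rcons_injl.
- case=> [|y v] //= v_ws; case: eqP => // last_k; apply: c0.
  by apply: contra v_ws => ?; rewrite lastI last_k; apply: map_f.
- rewrite big_distrl big_map /=; apply: eq_bigr => w _.
  by rewrite coef_mulx_rcons -mulrA /monomial -cats1 big_cat big_seq1.
Qed.

Definition coef_cons (k : I) (c : seq I -> R) (v : seq I) : R :=
  if v is y :: v' then (if y == k then c v' else 0) else 0.

Definition coef_xmul k c v := coef_cons k c v + delta k (c v).

Hypothesis delta0 : forall k, delta k 0 = 0.

Lemma is_coef_xmul s c k : is_coef s c -> is_coef (x k * s) (coef_xmul k c).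
Proof.
move=> [ws [u c0 ->]].
have cons_coef :
    is_coef (\sum_(w <- ws) phi (c w) * monomial x (k :: w)) (coef_cons k c).
  exists (map (cons k) ws); split.
  - by rewrite map_inj_uniq // => ? ? [].
  - case=> [|y v] //= v_ws; case: eqP => // y_k; apply: c0.
    by apply: contra v_ws => ?; rewrite y_k; apply: map_f.
  - by rewrite big_map; apply: eq_bigr => w _ /=; rewrite eqxx.
have delta_coef : is_coef (\sum_(w <- ws) phi (delta k (c w)) * monomial x w)
    (fun v => delta k (c v)).
  by exists ws; split=> // w /c0 ->.
suff -> : x k * (\sum_(w <- ws) phi (c w) * monomial x w) =
    \sum_(w <- ws) phi (c w) * monomial x (k :: w) +
    \sum_(w <- ws) phi (delta k (c w)) * monomial x w.
  exact: is_coefD cons_coef delta_coef.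
case: hS => _ _ x_phi; rewrite big_distrr -big_split /=; apply: eq_bigr => w _.
by rewrite mulrA x_phi mulrDl -mulrA /monomial big_cons.
Qed.

Variables (i j : I).
Hypothesis ij : i != j.

Lemma x_not_left_comaximal f g : f * x j + g * (1 - x j * x i) <> 1.
Proof.
move=> E; have [cf Hf] := is_coef_exists f; have [cg Hg] := is_coef_exists g.
have coefE : is_coef 1 (fun v =>
    coef_mulx j cf v + (cg v + - coef_mulx i (coef_mulx j cg) v)).
  rewrite -E mulrBr mulr1 mulrA.
  exact: is_coefD (is_coef_mulx j Hf)
    (is_coefD Hg (is_coefN (is_coef_mulx i (is_coef_mulx j Hg)))).
have {}E := is_coef_unique coefE is_coef1.
have cg_nil : cg [::] = 1 by have := E [::]; rewrite /= add0r oppr0 addr0.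
have step n : coef_vanish cg n.+2 -> coef_vanish cg n.
  move=> cg_n v v_n; have := E (rcons (rcons v j) i).
  rewrite coef_mulx_rcons_neq // !coef_mulx_rcons cg_n ?size_rcons //.
  by rewrite -size_eq0 size_rcons add0r sub0r => /eqP; rewrite oppr_eq0 => /eqP.
have [n cg_n] := is_coef_vanish Hg.
have cg0 : coef_vanish cg 0.
  by apply: (descend_to0 _ cg_n) => m /(coef_vanishW (leqnSn _)) /step.
by move: (cg0 [::] (leq0n _)); rewrite cg_nil; apply/eqP; exact: oner_neq0.
Qed.

Lemma x_not_right_comaximal f g : x j * f + (1 - x i * x j) * g <> 1.
Proof.
move=> E; have [cf Hf] := is_coef_exists f; have [cg Hg] := is_coef_exists g.
have coefE : is_coef 1 (fun v =>
    coef_xmul j cf v + (cg v + - coef_xmul i (coef_xmul j cg) v)).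
  rewrite -E mulrBl mul1r -mulrA.
  exact: is_coefD (is_coef_xmul j Hf)
    (is_coefD Hg (is_coefN (is_coef_xmul i (is_coef_xmul j Hg)))).
have {}E := is_coef_unique coefE is_coef1.
have [eq_ji eq_ij] : (j == i) = false /\ (i == j) = false.
  by rewrite eq_sym (negbTE ij).
have cf_step n : coef_vanish cf n.+1 -> coef_vanish cg n -> coef_vanish cf n.
  move=> cf_n cg_n v v_n; have := E (j :: v).
  rewrite /coef_xmul /= eqxx eq_ji (cf_n (j :: v)) //.
  rewrite (cg_n (j :: v)) ?(leqW v_n) //.
  by rewrite (cg_n v) // !delta0 !add0r delta0 oppr0 !addr0.
have cg_step n : coef_vanish cf n.+1 -> coef_vanish cg n.+1 -> coef_vanish cg n.
  move=> cf_n cg_n v v_n; have := E (i :: j :: v).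
  have long_ijv : (n.+1 <= size (i :: j :: v))%N by rewrite /= ltnS leqW.
  rewrite /coef_xmul /= !eqxx eq_ij (cf_n _ long_ijv) (cg_n _ long_ijv).
  rewrite (cg_n (j :: v)) // !delta0 !add0r delta0 !addr0.
  by move/eqP; rewrite oppr_eq0 => /eqP.
have [nf cf_n] := is_coef_vanish Hf; have [ng cg_n] := is_coef_vanish Hg.
have [cf0 cg0] : coef_vanish cf 0 /\ coef_vanish cg 0.
  apply: (@descend_to0 (fun m => coef_vanish cf m /\ coef_vanish cg m)
    (maxn nf ng)).
    move=> m [cf_m cg_m]; have cg_m' := cg_step m cf_m cg_m.
    by split=> //; apply: cf_step.
  by split; [apply: coef_vanishW cf_n | apply: coef_vanishW cg_n];
    rewrite ?leq_maxl ?leq_maxr.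
have := E [::]; rewrite /coef_xmul /= cf0 ?cg0 // !(delta0, add0r) oppr0.
by move/eqP; rewrite eq_sym oner_eq0.
Qed.

End Coefficients.

Theorem theorem5p3 (R : nzRingType) (I : countType) (i0 : I)
    (delta : I -> R -> R) (hder : forall i : I, is_derivation (delta i))
    (S : nzRingType) (phi : {rmorphism R -> S}) (x : I -> S)
    (hS : is_diff_poly_ring delta phi x) :
  left_quasi_duo S \/ right_quasi_duo S -> forall i j : I, i = j.
Proof.
move=> qduo i j; have [//|ij] := eqVneq i j; exfalso.
case: qduo => [left_qduo|right_qduo].
- have [f [g E]] := left_quasi_duo_comaximal (x j) (x i) left_qduo.
  exact (x_not_left_comaximal hS ij E).
- have [f [g E]] := right_quasi_duo_comaximal (x j) (x i) right_qduo.
  have delta0 k : delta k 0 = 0 by apply: additive_map0; case: (hder k).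
  exact (x_not_right_comaximal hS delta0 ij E).
Qed.
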